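(* Let $p$ be a prime and $G$ a finite abelian $p$-group. Then $G$ is a $2$-closed group if and only if $G$ is cyclic.
   Context: Permutations act on the right. For $X\leq{\rm Sym}(\Omega)$, the $2$-closure of $X$ on $\Omega$ is $X^{(2),\Omega}=\{\theta\in{\rm Sym}(\Omega)\mid \forall \alpha,\beta\in\Omega\ \exists g\in X:\ \alpha^\theta=\alpha^g,\ \beta^\theta=\beta^g\}$. An abstract group $G$ is called a $2$-closed group if $H=H^{(2),\Omega}$ for every set $\Omega$ and every subgroup $H\leq{\rm Sym}(\Omega)$ with $H\cong G$. *)

From mathcomp Require Import all_boot all_fingroup all_solvable.
Set Implicit Arguments.
Unset Strict Implicit.
Unset Printing Implicit Defensive.
Local Open Scope group_scope.

(* Permutations act on the right: alpha^(g h) = (alpha^g)^h.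
   A permutation group on an arbitrary set (type) Omega is a predicate
   H : (Omega -> Omega) -> Prop on maps Omega -> Omega. *)

Definition perm_group_isomorphic_to (gT : finGroupType) (G : {group gT})
    (Omega : Type) (H : (Omega -> Omega) -> Prop) : Prop :=
  exists f : gT -> (Omega -> Omega),
    [/\ (forall g, g \in G -> bijective (f g)),
        (forall g h, g \in G -> h \in G -> f (g * h) = f h \o f g),
        (forall g h, g \in G -> h \in G -> f g = f h -> g = h) &
        (forall theta, H theta <-> exists2 g, g \in G & theta = f g)].

Definition two_closure (Omega : Type) (X : (Omega -> Omega) -> Prop)
    (theta : Omega -> Omega) : Prop :=
  bijective theta /\
  forall alpha beta : Omega,
    exists g, X g /\ theta alpha = g alpha /\ theta beta = g beta.

Definition two_closed_group (gT : finGroupType) (G : {group gT}) : Prop :=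
  forall (Omega : Type) (H : (Omega -> Omega) -> Prop),
    perm_group_isomorphic_to G H ->
    forall theta, H theta <-> two_closure H theta.

From mathcomp Require Import all_boot all_fingroup all_solvable.
From mathcomp Require Import boolp.

(* If G is a cyclic p-group acting faithfully, the point stabilizers form a
   chain, so the smallest one fixes every point and is trivial: some point
   alpha has trivial stabilizer.  A permutation in the 2-closure agrees on each
   pair (alpha, beta) with a group element, which is always the same one
   because it is determined by the image of alpha.
   Conversely, a noncyclic abelian p-group contains a, b with <a> :&: <b> = 1
   and a not in <ab>.  Let G act by right multiplication on the disjoint union
   of G/<a>, G/<b> and G/<ab>, and let theta multiply the third orbit by a
   and fix the other two.  On any two orbits theta agrees with one of 1, a
   and b^-1, yet it is induced by no g in G: such a g would lie in
   <a> :&: <b> = 1 and be congruent to a modulo <ab>. *)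

Set Implicit Arguments.
Unset Strict Implicit.
Unset Printing Implicit Defensive.
Local Open Scope group_scope.

Section TwoClosure.
Variables (Omega : Type) (X : (Omega -> Omega) -> Prop).

Lemma sub_two_closure theta :
  (forall g, X g -> bijective g) -> X theta -> two_closure X theta.
Proof.
by move=> Xbij Xtheta; split=> [|al be]; [apply: Xbij | exists theta].
Qed.

End TwoClosure.

Definition free_point (gT : finGroupType) (G : {group gT}) (Omega : Type)
    (f : gT -> Omega -> Omega) (alpha : Omega) :=
  forall g h, g \in G -> h \in G -> f g alpha = f h alpha -> g = h.

Section PermRepresentation.
Variables (gT : finGroupType) (G : {group gT}) (Omega : Type).
Variable f : gT -> Omega -> Omega.
Hypothesis f_bij : forall g, g \in G -> bijective (f g).
Hypothesis fM : forall g h, g \in G -> h \in G -> f (g * h) = f h \o f g.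
Hypothesis f_inj : forall g h, g \in G -> h \in G -> f g = f h -> g = h.

Lemma perm_rep1 : f 1 = id.
Proof.
have [f1V f1K _] := f_bij (group1 G).
have f1f1 := fM (group1 G) (group1 G); rewrite mulg1 in f1f1.
apply: funext => x; apply: (can_inj f1K); exact: esym (congr1 (@^~ x) f1f1).
Qed.

Definition stabilizer alpha := [set g in G | `[< f g alpha = alpha >]].

Lemma stabilizer_group_set alpha : group_set (stabilizer alpha).
Proof.
apply/group_setP; split; first by rewrite inE group1 perm_rep1; apply/asboolP.
move=> g h /setIdP[gG /asboolP fix_g] /setIdP[hG /asboolP fix_h].
by rewrite inE groupM //; apply/asboolP; rewrite fM //= fix_g fix_h.
Qed.

Canonical stabilizer_group alpha := Group (stabilizer_group_set alpha).

Lemma stabilizer_sub alpha : stabilizer alpha \subset G.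
Proof. by apply/subsetP=> g /setIdP[]. Qed.

Lemma stabilizers_trivI g :
  g \in G -> (forall beta, g \in stabilizer beta) -> g = 1.
Proof.
move=> gG g_fix; apply: f_inj => //; rewrite perm_rep1; apply: funext => beta.
by have /setIdP[_ /asboolP] := g_fix beta.
Qed.

Lemma free_point_of_stabilizer1 alpha :
  stabilizer alpha = 1 -> free_point G f alpha.
Proof.
move=> stab1 g h gG hG fgh; apply/eqP; rewrite eq_mulgV1; apply/eqP/set1gP.
rewrite -stab1 inE groupM ?groupV //; apply/asboolP; rewrite fM ?groupV //= fgh.
have fVK : f h^-1 \o f h = id by rewrite -fM ?groupV // mulgV perm_rep1.
exact (congr1 (fun F => F alpha) fVK).
Qed.

Lemma free_point_of_min_stabilizer alpha :
  (forall beta, stabilizer alpha \subset stabilizer beta) ->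
  free_point G f alpha.
Proof.
move=> min_alpha; apply: free_point_of_stabilizer1.
apply/trivgP/subsetP => g g_fix; rewrite inE; apply/eqP/stabilizers_trivI.
  exact: subsetP (stabilizer_sub alpha) g g_fix.
by move=> beta; apply: subsetP (min_alpha beta) g g_fix.
Qed.

End PermRepresentation.

Lemma two_closure_free_point (gT : finGroupType) (G : {group gT})
    (Omega : Type) (H : (Omega -> Omega) -> Prop) (f : gT -> Omega -> Omega)
    (alpha : Omega) :
  (forall theta, H theta <-> exists2 g, g \in G & theta = f g) ->
  free_point G f alpha -> forall theta, two_closure H theta -> H theta.
Proof.
move=> fH free theta [_ agree]; apply/fH.
have [_ [/fH[g gG ->] [theta_alpha _]]] := agree alpha alpha.
exists g => //; apply: funext => beta.
have [_ [/fH[h hG ->] [theta_alpha' theta_beta]]] := agree alpha beta.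
by rewrite theta_beta (free h g) // -theta_alpha -theta_alpha'.
Qed.

Section CyclicPgroup.
Variables (gT : finGroupType) (G : {group gT}) (p : nat).
Hypotheses (p_pr : prime p) (pG : p.-group G) (cycG : cyclic G).

Lemma cyclic_pgroup_leq_card_sub (A B : {group gT}) :
  A \subset G -> B \subset G -> #|A| <= #|B| -> A \subset B.
Proof.
move=> sAG sBG; rewrite -(cardSg_cyclic cycG sAG sBG).
rewrite (card_pgroup (pgroupS sAG pG)) (card_pgroup (pgroupS sBG pG)).
by rewrite leq_exp2l ?prime_gt1 // => /dvdn_exp2l.
Qed.

Lemma cyclic_pgroup_min_subgroup (I : Type) (S : I -> {group gT}) (i0 : I) :
  (forall i, S i \subset G) -> exists i, forall j, S i \subset S j.
Proof.
move=> sSG; pose has_card n := `[< exists i, #|S i| = n >].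
have has_card_i0 : exists n, has_card n.
  by exists #|S i0|; apply/asboolP; exists i0.
case: (ex_minnP has_card_i0) => _ /asboolP[i <-] min_i; exists i => j.
apply: cyclic_pgroup_leq_card_sub => //.
by apply: min_i; apply/asboolP; exists j.
Qed.

Lemma cyclic_pgroup_two_closed : two_closed_group G.
Proof.
move=> Omega H [f [f_bij fM f_inj fH]] theta; split.
  by apply: sub_two_closure => g /fH[x xG ->]; apply: f_bij.
case: (pselectT Omega) => [Omega0 _ | alpha0].
  by apply/fH; exists 1 => //; apply: funext => beta; case: (Omega0 beta).
have [alpha min_alpha] := cyclic_pgroup_min_subgroup
  (S := stabilizer_group f_bij fM) alpha0 (stabilizer_sub G f).
exact: two_closure_free_point fH
  (free_point_of_min_stabilizer f_bij fM f_inj min_alpha) theta.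
Qed.

End CyclicPgroup.

Section CosetSum.
Variables (gT : finGroupType) (G : {group gT}).
Variables (I : eqType) (K : I -> {group gT}).
Hypothesis nKG : forall i, G \subset 'N(K i).
Hypothesis coreK1 : forall x, x \in G -> (forall i, x \in K i) -> x = 1.

Definition coset_sum := {i : I & coset_of (K i)}.

Definition coset_shift (u : forall i, coset_of (K i)) (w : coset_sum) :
  coset_sum := Tagged (fun i => coset_of (K i)) (tagged w * u (tag w)).

Definition coset_sum_act (x : gT) := coset_shift (fun i => coset (K i) x).

Definition coset_sum_perm (theta : coset_sum -> coset_sum) :=
  exists2 x, x \in G & theta = coset_sum_act x.

Lemma coset_shift_bij u : bijective (coset_shift u).
Proof.
exists (coset_shift (fun i => (u i)^-1)) => -[i c];
  by rewrite /coset_shift /= ?mulgK ?mulgKV.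
Qed.

Lemma coset_shift_inj u v :
  coset_shift u = coset_shift v -> forall i, u i = v i.
Proof.
move=> uv i; have := congr1 (@^~ (Tagged _ (1 : coset_of (K i)))) uv.
rewrite /coset_shift /= !mul1g.
exact: eq_from_Tagged.
Qed.

Lemma coset_sum_actM x y :
  x \in G -> y \in G ->
  coset_sum_act (x * y) = coset_sum_act y \o coset_sum_act x.
Proof.
move=> xG yG; apply: funext => -[i c].
by rewrite /coset_sum_act /coset_shift /= morphM ?mulgA ?(subsetP (nKG i)).
Qed.

Lemma coset_sum_act_inj x y :
  x \in G -> y \in G -> coset_sum_act x = coset_sum_act y -> x = y.
Proof.
move=> xG yG /coset_shift_inj xy; apply/eqP; rewrite eq_mulgV1; apply/eqP.
apply: coreK1 => [|i]; first by rewrite groupM ?groupV.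
by rewrite -mem_rcoset; apply/rcoset_kercosetP; rewrite ?(subsetP (nKG i)).
Qed.

Lemma coset_sum_perm_iso : perm_group_isomorphic_to G coset_sum_perm.
Proof.
exists coset_sum_act; split=> //; last exact: coset_sum_act_inj.
  by move=> x _; apply: coset_shift_bij.
exact: coset_sum_actM.
Qed.

Section CongruenceShift.
Variable t : I -> gT.

Let shift_t := coset_shift (fun i => coset (K i) (t i)).

Definition solves_congruences (J : pred I) x :=
  x \in G /\ forall i, J i -> coset (K i) x = coset (K i) (t i).

Lemma coset_shift_perm_solves :
  coset_sum_perm shift_t -> exists x, solves_congruences predT x.
Proof.
by case=> x xG /coset_shift_inj tx; exists x; split=> // i _; rewrite tx.
Qed.

Lemma coset_shift_two_closure :
  (forall i j, exists x, solves_congruences (pred2 i j) x) ->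
  two_closure coset_sum_perm shift_t.
Proof.
move=> pairwise; split; first exact: coset_shift_bij.
move=> [i c] [j d]; have [x [xG tx]] := pairwise i j.
exists (coset_sum_act x); split; first by exists x.
by rewrite /shift_t /coset_sum_act /coset_shift /= !tx //= eqxx ?orbT.
Qed.

Lemma not_two_closed_of_congruences :
  (forall i j, exists x, solves_congruences (pred2 i j) x) ->
  ~ (exists x, solves_congruences predT x) -> ~ two_closed_group G.
Proof.
move=> pairwise no_solution G_closed; apply/no_solution/coset_shift_perm_solves.
by apply/(G_closed _ _ coset_sum_perm_iso)/coset_shift_two_closure.
Qed.

End CongruenceShift.

End CosetSum.

Lemma abelian_not_two_closed (gT : finGroupType) (G : {group gT}) (a b : gT) :
  abelian G -> a \in G -> b \in G ->
  <[a]> :&: <[b]> = 1 -> a \notin <[a * b]> -> ~ two_closed_group G.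
Proof.
move=> cGG aG bG tiAB a_notin_AB.
pose K (i : 'I_3) := nth 1%G [:: <[a]>%G; <[b]>%G; <[a * b]>%G] i.
pose t (i : 'I_3) := nth 1 [:: 1; 1; a] i.
have nKG i : G \subset 'N(K i).
  by case: i => [[|[|[|//]]] ?]; apply: sub_abelian_norm;
    rewrite // cycle_subG ?groupM.
have coset_a : coset <[a]> a = coset <[a]> 1.
  by rewrite coset_id ?cycle_id ?morph1.
have coset_b : coset <[b]> b^-1 = coset <[b]> 1.
  by rewrite coset_id ?groupV ?cycle_id ?morph1.
have coset_ab : coset <[a * b]> b^-1 = coset <[a * b]> a.
  by have := coset_kerl b^-1 (cycle_id (a * b)); rewrite mulgK.
have solves_off (k : 'I_3) : exists x, solves_congruences G K t (predC1 k) x.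
  case: k => [[|[|[|//]]] ?]; [exists b^-1 | exists a | exists 1];
  split=> [|[[|[|[|//]]] ?]] //=;
  by rewrite /K /t /= ?groupV ?coset_a ?coset_b ?coset_ab.
apply: (@not_two_closed_of_congruences _ G _ K nKG _ t).
- move=> x xG Kx; apply/set1gP; rewrite -tiAB inE.
  by rewrite (Kx (Ordinal (isT : 0 < 3))) (Kx (Ordinal (isT : 1 < 3))).
- move=> i j; have [k /andP[ki kj]] : exists k : 'I_3, (k != i) && (k != j).
    case: i j => [[|[|[|//]]] ?] [[|[|[|//]]] ?];
      by [exists ord0 | exists (Ordinal (isT : 1 < 3)) | exists ord_max].
  have [x [xG tx]] := solves_off k; exists x; split=> // l /orP[] /eqP->;
    by apply: tx; rewrite /= eq_sym.
case=> x [xG tx]; have nKx i : x \in 'N(K i) := subsetP (nKG i) x xG.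
have x1 : x = 1.
  apply/set1gP; rewrite -tiAB inE.
  have := tx (Ordinal (isT : 1 < 3)) isT; have := tx ord0 isT.
  rewrite /K /t /= !morph1 => /(coset_idr (nKx ord0))->.
  by move/(coset_idr (nKx (Ordinal (isT : 1 < 3))))->.
have := tx ord_max isT; rewrite /K /t /= x1 morph1 => /esym.
by move/(coset_idr (subsetP (nKG ord_max) a aG)); apply/negP.
Qed.

Lemma noncyclic_abelian_pgroup_witness (gT : finGroupType) (G : {group gT}) p :
  prime p -> p.-group G -> abelian G -> ~~ cyclic G ->
  exists a b, [/\ a \in G, b \in G, <[a]> :&: <[b]> = 1 & a \notin <[a * b]> ].
Proof.
move=> p_pr pG cGG ncycG.
have : 1 < 'r_p(G) by rewrite -(rank_pgroup pG) ltnNge -abelian_rank1_cyclic.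
case/p_rank_geP => E /pnElemPcard[sEG abelE cardE].
have [_ expE] := abelemP p_pr abelE.
have ntE : E :!=: 1.
  by rewrite -cardG_gt1 cardE (ltn_exp2l 0 2 (prime_gt1 p_pr)).
have [a aE nt_a] := trivgPn _ ntE; have oa := abelem_order_p abelE aE nt_a.
have [b bE b_notin_a] : exists2 b, b \in E & b \notin <[a]>.
  apply/subsetPn/negP => /subset_leq_card.
  by rewrite cardE -orderE oa (leq_exp2l 2 1 (prime_gt1 p_pr)).
have nt_b : b != 1 by apply: contraNneq b_notin_a => ->; apply: group1.
exists a, b; split; rewrite ?(subsetP sEG) //.
  rewrite setIC prime_TIg ?cycle_subG // -orderE.
  by rewrite (abelem_order_p abelE bE nt_b).
apply: contra b_notin_a => a_ab.
have oab : #[a * b] <= #[a].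
  by rewrite oa dvdn_leq ?prime_gt0 // order_dvdn expE ?groupM.
have ab_a : <[a * b]> = <[a]>.
  by apply/eqP; rewrite eq_sym eqEcard cycle_subG a_ab -!orderE oab.
rewrite -ab_a; have := groupM (groupVr a_ab) (cycle_id (a * b)).
by rewrite mulKg.
Qed.

Theorem mainTheorem8 (gT : finGroupType) (G : {group gT}) (p : nat) :
  prime p -> p.-group G -> abelian G ->
  (two_closed_group G <-> cyclic G).
Proof.
move=> p_pr pG cGG; split; last exact: cyclic_pgroup_two_closed p_pr pG.
move=> G_closed; apply: contraT => ncycG.
have [a [b [aG bG tiAB a_notin_ab]]] :=
  noncyclic_abelian_pgroup_witness p_pr pG cGG ncycG.
by case: (abelian_not_two_closed cGG aG bG tiAB a_notin_ab G_closed).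
Qed.
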